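(* Let $X$ be a finite set of nodes of the triangular grid with $G_X$ connected and without holes. Let $P$ be an $x$-portal dividing $X$ into sides $A$ and $B$, let $S\subseteq A\cup P$ be non-empty, and let $u\in B'=B\cap\mathrm{vis}(P)$ with $\Delta_u\subseteq X$. Then $n_z(u)$ is a feasible parent of $u$ if $\mathrm{dist}(S,\pi_z(u))\le\mathrm{dist}(S,\pi_y(u))$, and $n_y(u)$ is a feasible parent of $u$ if $\mathrm{dist}(S,\pi_z(u))\ge\mathrm{dist}(S,\pi_y(u))$.
   Context: $G_\Delta=(V_\Delta,E_\Delta)$ is the infinite regular triangular grid graph, with edges parallel to three axes: $x$ (west–east), $y$, $z$. $G_X$ is the subgraph induced by $X$; $X$ has no holes if the subgraph induced by $V_\Delta\setminus X$ is connected. $\mathrm{dist}$ is the distance in $G_X$ and $\mathrm{dist}(S,v)=\min_{s\in S}\mathrm{dist}(s,v)$. For an axis $d$, the $d$-portals are the vertex sets of the connected components of $(X,E_d)$, $E_d$ being the edges of $G_X$ parallel to $d$; $\mathrm{portal}_d(u)$ is the $d$-portal containing $u$. For the $x$-portal $P$ (a horizontal segment), $A$ is the union of the components of the subgraph induced by $X\setminus P$ that contain a node adjacent to $P$ on one side (half-plane) of the line through $P$, and $B=X\setminus(P\cup A)$. An amoebot $v$ is visible by $w$ if $v\in\mathrm{portal}_x(w)\cup\mathrm{portal}_y(w)\cup\mathrm{portal}_z(w)$; $\mathrm{vis}(P)=\bigcup_{w\in P}(\mathrm{portal}_x(w)\cup\mathrm{portal}_y(w)\cup\mathrm{portal}_z(w))$.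 For $u\in B'$, $\pi_y(u),\pi_z(u)\in V_\Delta$ are the projections of $u$ along the $y$- and $z$-axis onto the line through $P$; $\Delta_u$ is the set of nodes of $V_\Delta$ in the (closed) triangle with corners $u,\pi_y(u),\pi_z(u)$; $n_y(u),n_z(u)\in V_\Delta$ are the neighbors of $u$ in the direction of $\pi_y(u)$ and $\pi_z(u)$, respectively. A neighbor $v\in X$ of $u$ is a feasible parent of $u$ (with respect to $S$) if $\mathrm{dist}(S,u)=\mathrm{dist}(S,v)+1$. *)

From Stdlib Require Import ZArith QArith List.
Open Scope Z_scope.

(* A node (a,b) of the triangular grid sits at a*e_x + b*e_y in the plane,
   with e_x = (1,0) (west-east) and e_y = (1/2, sqrt 3/2).  The three axes:
   x : (+-1, 0),  y : (0, +-1),  z : +-(-1, 1) = e_y - e_x.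
   Horizontal lines are the sets {b = const}. *)
Definition node := (Z * Z)%type.

Inductive axis := AxX | AxY | AxZ.

Definition edge_d (d : axis) (u v : node) : Prop :=
  let da := fst v - fst u in let db := snd v - snd u in
  match d with
  | AxX => (da = 1 \/ da = -1) /\ db = 0
  | AxY => da = 0 /\ (db = 1 \/ db = -1)
  | AxZ => (da = -1 /\ db = 1) \/ (da = 1 /\ db = -1)
  end.

Definition adj (u v : node) : Prop :=
  edge_d AxX u v \/ edge_d AxY u v \/ edge_d AxZ u v.

Inductive walk (Y : node -> Prop) (E : node -> node -> Prop)
  : node -> node -> nat -> Prop :=
| walk_refl : forall u, Y u -> walk Y E u u 0
| walk_step : forall u w v n, Y u -> E u w -> walk Y E w v n ->
    walk Y E u v (S n).

Definition connected_in (Y : node -> Prop) (E : node -> node -> Prop)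
  (u v : node) : Prop := exists n, walk Y E u v n.

Definition finite_set (X : node -> Prop) : Prop :=
  exists l : list node, forall v, X v -> In v l.

Definition graph_connected (X : node -> Prop) : Prop :=
  forall u v, X u -> X v -> connected_in X adj u v.

Definition no_holes (X : node -> Prop) : Prop :=
  forall u v, ~ X u -> ~ X v -> connected_in (fun w => ~ X w) adj u v.

Definition portal (X : node -> Prop) (d : axis) (u : node) (v : node) : Prop :=
  connected_in X (edge_d d) u v.

Definition vis (X : node -> Prop) (P : node -> Prop) (v : node) : Prop :=
  exists w, P w /\
    (portal X AxX w v \/ portal X AxY w v \/ portal X AxZ w v).

Definition on_side (s : bool) (b0 : Z) (v : node) : Prop :=
  if s then b0 < snd v else snd v < b0.

Definition sideA (X P : node -> Prop) (s : bool) (b0 : Z) (v : node) : Prop :=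
  X v /\ ~ P v /\
  exists w, connected_in (fun t => X t /\ ~ P t) adj w v /\
            (exists p, P p /\ adj w p) /\ on_side s b0 w.

Definition sideB (X P : node -> Prop) (s : bool) (b0 : Z) (v : node) : Prop :=
  X v /\ ~ P v /\ ~ sideA X P s b0 v.

Definition distS (X S : node -> Prop) (v : node) (n : nat) : Prop :=
  (exists s, S s /\ walk X adj s v n) /\
  (forall s m, S s -> walk X adj s v m -> (n <= m)%nat).

(* projections onto the line {b = b0} along the y- and z-axis *)
Definition pi_y (b0 : Z) (u : node) : node := (fst u, b0).
Definition pi_z (b0 : Z) (u : node) : node := (fst u + snd u - b0, b0).

(* neighbours of u in the direction of pi_y(u), pi_z(u) *)
Definition n_y (b0 : Z) (u : node) : node :=
  (fst u, snd u - Z.sgn (snd u - b0)).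
Definition n_z (b0 : Z) (u : node) : node :=
  (fst u + Z.sgn (snd u - b0), snd u - Z.sgn (snd u - b0)).

(* v lies in the closed triangle with corners c1 c2 c3 (convex combination;
   axial coordinates are an affine image of the plane) *)
Definition in_triangle (c1 c2 c3 v : node) : Prop :=
  exists l1 l2 l3 : Q,
    (0 <= l1)%Q /\ (0 <= l2)%Q /\ (0 <= l3)%Q /\ (l1 + l2 + l3 == 1)%Q /\
    (inject_Z (fst v) == l1 * inject_Z (fst c1) + l2 * inject_Z (fst c2)
                          + l3 * inject_Z (fst c3))%Q /\
    (inject_Z (snd v) == l1 * inject_Z (snd c1) + l2 * inject_Z (snd c2)
                          + l3 * inject_Z (snd c3))%Q.

Definition Delta (b0 : Z) (u : node) (v : node) : Prop :=
  in_triangle u (pi_y b0 u) (pi_z b0 u) v.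

Definition feasible_parent (X S : node -> Prop) (u v : node) : Prop :=
  X v /\ adj u v /\
  exists du dv, distS X S u du /\ distS X S v dv /\ du = (dv + 1)%nat.

(** Let [u] lie at height [h > 0] above the line of [P] (on either side), so that
    the base of [Delta_u] is the segment from [pi_y u] to [pi_z u].  Every walk
    from [S] to [u] must cross [P], and since the base lies in [X] and [P] sees
    [u] it lies in [P]; hence a shortest walk has length at least
    [dist(S, base_k) + h] for some base node [base_k].  Inside [Delta_u] each base
    node [base_k] is joined to [n_z u] by a walk of length [h - 1] unless
    [base_k = pi_y u], and to [n_y u] unless [base_k = pi_z u].  In the
    excluded case the hypothesis on [dist(S, pi_z u)] and [dist(S, pi_y u)] lets
    us switch to the other end of the base, so [dist(S, n) <= dist(S, u) - 1]
    for the parent candidate [n]; adjacency gives the reverse inequality. *)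
From Stdlib Require Import ZArith QArith List Lia Field Classical Wf_nat.
Open Scope Z_scope.

Lemma adj_sym u v : adj u v -> adj v u.
Proof. unfold adj, edge_d; lia. Qed.

Section Walks.
Variables (Y : node -> Prop) (E : node -> node -> Prop).

Lemma walk_ends x y n : walk Y E x y n -> Y x /\ Y y.
Proof. induction 1; tauto. Qed.

Lemma walk_cat x y z n m :
  walk Y E x y n -> walk Y E y z m -> walk Y E x z (n + m).
Proof. induction 1; intros; simpl; [assumption | econstructor; eauto]. Qed.

Lemma walk_rcons x y z n :
  walk Y E x y n -> E y z -> Y z -> walk Y E x z (S n).
Proof.
  intros Wxy Eyz Yz. rewrite <- Nat.add_1_r.
  apply walk_cat with y; [assumption |].
  apply walk_step with z; [apply (walk_ends _ _ _ Wxy) | assumption | now constructor].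
Qed.

Lemma walk_split (P : node -> Prop) x y n : walk Y E x y n ->
  (exists p n1 n2, P p /\ walk Y E x p n1 /\ walk Y E p y n2 /\ (n1 + n2 = n)%nat) \/
  walk (fun v => Y v /\ ~ P v) E x y n.
Proof.
  induction 1 as [v Yv | v w z n Yv Evw Wwz IH].
  - destruct (classic (P v)).
    + left. exists v, 0%nat, 0%nat. repeat split; auto; now constructor.
    + right. now constructor.
  - destruct (classic (P v)) as [Pv | nPv].
    + left. exists v, 0%nat, (S n). repeat split; auto; [now constructor | econstructor; eauto].
    + destruct IH as [(p & n1 & n2 & Pp & W1 & W2 & Hn) | W].
      * left. exists p, (S n1), n2. repeat split; auto; [econstructor; eauto | lia].
      * right. econstructor; eauto.
Qed.

End Walks.

Lemma walk_sub (Y Y' : node -> Prop) (E E' : node -> node -> Prop) x y n :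
  (forall v, Y v -> Y' v) -> (forall v w, E v w -> E' v w) ->
  walk Y E x y n -> walk Y' E' x y n.
Proof. intros HY HE. induction 1; econstructor; eauto. Qed.

Lemma walk_adj_displacement Y x y n : walk Y adj x y n ->
  Z.abs (fst y - fst x) <= Z.of_nat n /\ Z.abs (snd y - snd x) <= Z.of_nat n /\
  Z.abs (fst y + snd y - (fst x + snd x)) <= Z.of_nat n.
Proof. induction 1; unfold adj, edge_d in *; lia. Qed.

Lemma walk_y_fst Y x y n : walk Y (edge_d AxY) x y n -> fst y = fst x.
Proof. induction 1; unfold edge_d in *; lia. Qed.

Lemma walk_z_sum Y x y n :
  walk Y (edge_d AxZ) x y n -> fst y + snd y = fst x + snd x.
Proof. induction 1; unfold edge_d in *; lia. Qed.

Lemma walk_x_segment Y x y n : walk Y (edge_d AxX) x y n ->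
  snd y = snd x /\
  forall c, Z.min (fst x) (fst y) <= c <= Z.max (fst x) (fst y) -> Y (c, snd x).
Proof.
  induction 1 as [[c0 b] Yv | v w z n Yv Evw Wwz [Hsnd Hseg]].
  - split; [reflexivity |]. intros c Hc. now replace c with c0 by (simpl in Hc; lia).
  - unfold edge_d in Evw. split; [lia |]. intros c Hc.
    destruct (Z.eq_dec c (fst v)) as [-> | Hcv]; [now destruct v |].
    replace (snd v) with (snd w) by lia. apply Hseg. lia.
Qed.

Lemma segment_walk_x (Y : node -> Prop) b : forall N c1 c2,
  Z.of_nat N = Z.abs (c1 - c2) ->
  (forall c, Z.min c1 c2 <= c <= Z.max c1 c2 -> Y (c, b)) ->
  walk Y (edge_d AxX) (c1, b) (c2, b) N.
Proof.
  induction N as [| N IH]; intros c1 c2 HN Hseg.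
  - replace c2 with c1 by lia. constructor. apply Hseg; lia.
  - set (c := if Z_lt_ge_dec c1 c2 then c1 + 1 else c1 - 1).
    apply walk_step with (c, b).
    + apply Hseg; lia.
    + unfold c, edge_d; simpl. destruct (Z_lt_ge_dec c1 c2); lia.
    + apply IH; [unfold c; destruct (Z_lt_ge_dec c1 c2); lia |].
      intros c' Hc'. apply Hseg. unfold c in Hc'. destruct (Z_lt_ge_dec c1 c2); lia.
Qed.

Section XPortal.
Variables (X : node -> Prop) (p0 : node).
Let P := portal X AxX p0.

Lemma portal_x_in p : P p -> X p.
Proof. intros [n W]. apply (walk_ends _ _ _ _ _ W). Qed.

Lemma portal_x_line p : P p -> snd p = snd p0.
Proof. intros [n W]. apply (walk_x_segment _ _ _ _ W). Qed.

Lemma portal_x_walk p q : P p -> P q ->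
  walk X adj p q (Z.to_nat (Z.abs (fst p - fst q))).
Proof.
  intros [n1 W1] [n2 W2].
  destruct (walk_x_segment _ _ _ _ W1) as [E1 S1], (walk_x_segment _ _ _ _ W2) as [E2 S2].
  destruct p as [c1 b1], q as [c2 b2]; simpl in *; subst b1 b2.
  apply walk_sub with X (edge_d AxX); [auto | unfold adj; auto |].
  apply segment_walk_x; [lia |]. intros c Hc.
  assert (Hc' : Z.min (fst p0) c1 <= c <= Z.max (fst p0) c1 \/
                Z.min (fst p0) c2 <= c <= Z.max (fst p0) c2) by lia.
  destruct Hc'; [apply S1 | apply S2]; assumption.
Qed.

Lemma portal_x_extend c1 c2 b : P (c1, b) ->
  (forall c, Z.min c1 c2 <= c <= Z.max c1 c2 -> X (c, b)) -> P (c2, b).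
Proof.
  intros [n W] Hseg. exists (n + Z.to_nat (Z.abs (c1 - c2)))%nat.
  apply walk_cat with (c1, b); [assumption |]. apply segment_walk_x; [lia | assumption].
Qed.

Lemma vis_portal_x u : ~ P u -> vis X P u ->
  snd u <> snd p0 /\ (P (pi_y (snd p0) u) \/ P (pi_z (snd p0) u)).
Proof.
  intros nPu (w & Pw & [[n W] | [[n W] | [n W]]]);
    pose proof (portal_x_line _ Pw) as Hw; destruct u as [a b], w as [c d]; simpl in *; subst d.
  - exfalso. apply nPu. destruct Pw as [m Wm]. exists (m + n)%nat. eapply walk_cat; eauto.
  - apply walk_y_fst in W. simpl in W. subst c. split; [| now left].
    intros ->. now apply nPu.
  - apply walk_z_sum in W. simpl in W. unfold pi_z; simpl.
    replace (a + b - snd p0) with c by lia. split; [| now right].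
    intros ->. apply nPu. now replace a with c by lia.
Qed.

End XPortal.

Definition reach (X S : node -> Prop) (v : node) (n : nat) : Prop :=
  exists s, S s /\ walk X adj s v n.

Section Distances.
Variables X S : node -> Prop.

Lemma distS_reach v d : distS X S v d -> reach X S v d.
Proof. now intros []. Qed.

Lemma distS_le v d m : distS X S v d -> reach X S v m -> (d <= m)%nat.
Proof. intros [_ Hmin] (s & Ss & W). eauto. Qed.

Lemma distS_exists v n : reach X S v n -> exists d, distS X S v d.
Proof.
  intros Hn.
  destruct (dec_inh_nat_subset_has_unique_least_element (reach X S v))
    as (d & [Hd Hmin] & _); [intros; apply classic | eauto |].
  exists d. split; [assumption |]. intros s m Ss W. apply Hmin. now exists s.
Qed.

Lemma feasible_parent_of_reach u v du m :
  distS X S u du -> adj u v -> reach X S v m -> (m < du)%nat ->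
  feasible_parent X S u v.
Proof.
  intros Hu Huv Hv Hm.
  destruct (distS_exists _ _ Hv) as [dv Hdv].
  destruct (distS_reach _ _ Hdv) as (s & Ss & Wv).
  destruct (distS_reach _ _ Hu) as (s' & _ & Wu).
  assert (Hvu : reach X S u (dv + 1)).
  { exists s. split; [assumption |]. rewrite Nat.add_1_r.
    apply walk_rcons with v; [assumption | now apply adj_sym | apply (walk_ends _ _ _ _ _ Wu)]. }
  split; [apply (walk_ends _ _ _ _ _ Wv) |]. split; [assumption |].
  exists du, dv. split; [assumption | split; [assumption |]].
  pose proof (distS_le _ _ _ Hu Hvu). pose proof (distS_le _ _ _ Hdv Hv). lia.
Qed.

(** Since [S] lies in [A \/ P] and [A] is a union of components of [X \ P], a
    walk from [S] avoiding [P] would put its endpoint in [A]. *)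
Lemma reach_sideB_through_portal P side b0 u n :
  (forall v, S v -> sideA X P side b0 v \/ P v) -> sideB X P side b0 u ->
  reach X S u n ->
  exists p n1 n2, P p /\ reach X S p n1 /\ walk X adj p u n2 /\ (n1 + n2 = n)%nat.
Proof.
  intros HS (_ & _ & nAu) (s & Ss & W).
  destruct (walk_split _ _ P _ _ _ W) as [(p & n1 & n2 & Pp & W1 & W2 & Hn) | Wout].
  - exists p, n1, n2. repeat split; auto. now exists s.
  - exfalso. apply nAu.
    destruct (walk_ends _ _ _ _ _ Wout) as [[_ nPs] [Xu nPu]].
    destruct (HS _ Ss) as [(_ & _ & w & [m Wws] & HwP & Hw) | Ps]; [| tauto].
    repeat split; auto. exists w. repeat split; auto.
    exists (m + n)%nat. eapply walk_cat; eauto.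
Qed.

End Distances.

Lemma Qdiv_Z_nonneg x y : 0 <= x -> 0 < y -> (0 <= inject_Z x / inject_Z y)%Q.
Proof.
  intros. apply Qle_shift_div_l; rewrite ?Qmult_0_l; change 0%Q with (inject_Z 0);
    [rewrite <- Zlt_Qlt | rewrite <- Zle_Qle]; assumption.
Qed.

Section Triangle.
Variables (a b0 sg h : Z).
Hypothesis Hsg : sg = 1 \/ sg = -1.
Hypothesis Hh : 1 <= h.

(** [tri i j] is the node [i] steps towards [pi_z] along the base line and [j]
    levels away from it, on the side of [sg]; [Delta_u] is [0 <= i, 0 <= j,
    i + j <= h] with apex [u = tri 0 h]. *)
Definition tri (i j : Z) : node := (a + sg * i, b0 + sg * j).

Lemma tri_adj i j i' j' : j' = j - 1 -> i' = i \/ i' = i + 1 -> adj (tri i j) (tri i' j').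
Proof. intros -> Hi. unfold adj, edge_d, tri; simpl. destruct Hsg; subst; lia. Qed.

Lemma pi_y_apex : pi_y b0 (tri 0 h) = tri 0 0.
Proof. unfold pi_y, tri; simpl; f_equal; lia. Qed.

Lemma pi_z_apex : pi_z b0 (tri 0 h) = tri h 0.
Proof. unfold pi_z, tri; simpl; f_equal; lia. Qed.

Lemma sgn_apex : Z.sgn (snd (tri 0 h) - b0) = sg.
Proof.
  unfold tri; simpl. replace (b0 + sg * h - b0) with (sg * h) by lia.
  destruct Hsg; subst; [apply Z.sgn_pos | apply Z.sgn_neg]; lia.
Qed.

Lemma n_y_apex : n_y b0 (tri 0 h) = tri 0 (h - 1).
Proof. unfold n_y. rewrite sgn_apex. unfold tri; simpl; f_equal; lia. Qed.

Lemma n_z_apex : n_z b0 (tri 0 h) = tri 1 (h - 1).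
Proof. unfold n_z. rewrite sgn_apex. unfold tri; simpl; f_equal; lia. Qed.

(** Barycentric coordinates of [tri i j] are [(j, h - i - j, i) / h]. *)
Lemma Delta_tri i j : 0 <= i -> 0 <= j -> i + j <= h -> Delta b0 (tri 0 h) (tri i j).
Proof.
  intros Hi Hj Hij. unfold Delta, in_triangle, pi_y, pi_z, tri; simpl.
  exists (inject_Z j / inject_Z h)%Q, (inject_Z (h - i - j) / inject_Z h)%Q,
         (inject_Z i / inject_Z h)%Q.
  assert (Hh0 : ~ (inject_Z h == 0)%Q).
  { change 0%Q with (inject_Z 0). rewrite inject_Z_injective. lia. }
  repeat split; try (apply Qdiv_Z_nonneg; lia);
    unfold Z.sub; rewrite ?inject_Z_plus, ?inject_Z_opp, ?inject_Z_mult; field; assumption.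
Qed.

Lemma walk_to_apex_lower_bound Y c n : walk Y adj (c, b0) (tri 0 h) n ->
  exists k, 0 <= k <= h /\ h + Z.abs (c - fst (tri k 0)) <= Z.of_nat n.
Proof.
  intros W. apply walk_adj_displacement in W. unfold tri in *; simpl in *.
  destruct Hsg; subst sg.
  - exists (Z.max 0 (Z.min h (c - a))). lia.
  - exists (Z.max 0 (Z.min h (a - c))). lia.
Qed.

Section Climb.
Variable X : node -> Prop.
Hypothesis HX : forall i j, 0 <= i -> 0 <= j -> i + j <= h -> X (tri i j).

Lemma walk_climb : forall N i j k, Z.of_nat N = j -> 0 <= i -> i + j <= h ->
  i <= k <= i + j -> walk X adj (tri k 0) (tri i j) N.
Proof.
  induction N as [| N IH]; intros i j k HN Hi Hij Hk.
  - replace k with i by lia. replace j with 0 by lia. constructor. apply HX; lia.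
  - set (i' := if Z_le_gt_dec k (i + (j - 1)) then i else i + 1).
    apply walk_rcons with (tri i' (j - 1)).
    + apply IH; unfold i'; destruct (Z_le_gt_dec k (i + (j - 1))); lia.
    + apply adj_sym, tri_adj; [reflexivity |]. unfold i'.
      destruct (Z_le_gt_dec k (i + (j - 1))); auto.
    + apply HX; lia.
Qed.

Lemma base_in_portal p0 k0 : 0 <= k0 <= h -> portal X AxX p0 (tri k0 0) ->
  forall k, 0 <= k <= h -> portal X AxX p0 (tri k 0).
Proof.
  intros Hk0 Pk0 k Hk. apply portal_x_extend with (fst (tri k0 0)); [assumption |].
  intros c Hc. unfold tri in Hc; simpl in Hc.
  assert (Hc' : exists k', 0 <= k' <= h /\ c = a + sg * k').
  { destruct Hsg as [E | E]; rewrite E in Hc; [exists (c - a) | exists (a - c)]; lia. }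
  destruct Hc' as (k' & Hk' & ->). apply (HX k' 0); lia.
Qed.

Variables (S P : node -> Prop).
Hypothesis HPline : forall p, P p -> snd p = b0.
Hypothesis HPwalk : forall p q, P p -> P q ->
  walk X adj p q (Z.to_nat (Z.abs (fst p - fst q))).
Hypothesis HPbase : forall k, 0 <= k <= h -> P (tri k 0).
Hypothesis HPsep : forall n, reach X S (tri 0 h) n ->
  exists p n1 n2, P p /\ reach X S p n1 /\ walk X adj p (tri 0 h) n2 /\ (n1 + n2 = n)%nat.

Lemma reach_apex_through_base n : reach X S (tri 0 h) n ->
  exists k m, 0 <= k <= h /\ reach X S (tri k 0) m /\ Z.of_nat m + h <= Z.of_nat n.
Proof.
  intros Hn. destruct (HPsep _ Hn) as ([c b] & n1 & n2 & Pp & (s & Ss & W1) & W2 & Hn12).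
  pose proof (HPline _ Pp) as Hb. simpl in Hb. subst b.
  destruct (walk_to_apex_lower_bound _ _ _ W2) as (k & Hk & Hlen).
  exists k, (n1 + Z.to_nat (Z.abs (c - fst (tri k 0))))%nat.
  split; [assumption | split; [| lia]].
  exists s. split; [assumption |]. apply walk_cat with (c, b0); [assumption |].
  apply (HPwalk (c, b0)); auto.
Qed.

(** [walk_climb] reaches the parent [tri i0 (h - 1)] from exactly the base nodes
    [i0 <= k <= i0 + h - 1]. *)
Lemma feasible_parent_of_base_window i0 du : i0 = 0 \/ i0 = 1 ->
  distS X S (tri 0 h) du ->
  (forall k m, 0 <= k <= h -> reach X S (tri k 0) m ->
     exists k' m', i0 <= k' <= i0 + h - 1 /\ reach X S (tri k' 0) m' /\ (m' <= m)%nat) ->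
  feasible_parent X S (tri 0 h) (tri i0 (h - 1)).
Proof.
  intros Hi0 Hdu Hwindow.
  destruct (reach_apex_through_base _ (distS_reach _ _ _ _ Hdu)) as (k & m & Hk & Hm & Hmdu).
  destruct (Hwindow _ _ Hk Hm) as (k' & m' & Hk' & (s & Ss & W) & Hm').
  apply feasible_parent_of_reach with du (m' + Z.to_nat (h - 1))%nat; [assumption | | | lia].
  - apply tri_adj; lia.
  - exists s. split; [assumption |]. apply walk_cat with (tri k' 0); [assumption |].
    apply walk_climb; lia.
Qed.

Lemma feasible_parents_apex dz dy : (exists n, reach X S (tri 0 h) n) ->
  distS X S (tri h 0) dz -> distS X S (tri 0 0) dy ->
  ((dz <= dy)%nat -> feasible_parent X S (tri 0 h) (tri 1 (h - 1))) /\
  ((dy <= dz)%nat -> feasible_parent X S (tri 0 h) (tri 0 (h - 1))).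
Proof.
  intros [n Hn] Hz Hy. destruct (distS_exists _ _ _ _ Hn) as [du Hdu].
  split; intros Hle; apply feasible_parent_of_base_window with du; auto;
    intros k m Hk Hm.
  - destruct (Z.eq_dec k 0) as [-> | Hk0].
    + exists h, dz. pose proof (distS_le _ _ _ _ _ Hy Hm).
      repeat split; [lia | lia | now apply distS_reach | lia].
    + exists k, m. repeat split; auto; lia.
  - destruct (Z.eq_dec k h) as [-> | Hkh].
    + exists 0, dy. pose proof (distS_le _ _ _ _ _ Hz Hm).
      repeat split; [lia | lia | now apply distS_reach | lia].
    + exists k, m. repeat split; auto; lia.
Qed.

End Climb.
End Triangle.

Lemma node_as_apex a b b0 : b <> b0 ->
  exists sg h, (sg = 1 \/ sg = -1) /\ 1 <= h /\ (a, b) = tri a b0 sg 0 h.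
Proof.
  intros Hb. unfold tri.
  destruct (Z_lt_ge_dec b0 b); [exists 1, (b - b0) | exists (-1), (b0 - b)];
    repeat split; try lia; f_equal; lia.
Qed.

Theorem mainTheorem19 :
  forall (X : node -> Prop) (p0 : node) (s : bool) (S : node -> Prop) (u : node),
    finite_set X ->
    graph_connected X ->
    no_holes X ->
    X p0 ->
    let P := portal X AxX p0 in
    let b0 := snd p0 in
    (forall v, S v -> sideA X P s b0 v \/ P v) ->
    (exists v, S v) ->
    sideB X P s b0 u ->
    vis X P u ->
    (forall v, Delta b0 u v -> X v) ->
    (forall dz dy, distS X S (pi_z b0 u) dz -> distS X S (pi_y b0 u) dy ->
       (dz <= dy)%nat -> feasible_parent X S u (n_z b0 u)) /\
    (forall dz dy, distS X S (pi_z b0 u) dz -> distS X S (pi_y b0 u) dy ->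
       (dy <= dz)%nat -> feasible_parent X S u (n_y b0 u)).
Proof.
  intros X p0 side S [a b] _ Hconn _ _ P b0 HS [v Sv] HB Hvis HDelta.
  pose proof HB as (Xu & nPu & _).
  destruct (vis_portal_x X p0 _ nPu Hvis) as [Hb Hfoot]. fold b0 in Hb, Hfoot.
  destruct (node_as_apex a b b0 Hb) as (sg & h & Hsg & Hh & Hu).
  rewrite Hu in *.
  rewrite (pi_y_apex a b0 sg h), (pi_z_apex a b0 sg h) in *.
  rewrite (n_y_apex a b0 sg h Hsg Hh), (n_z_apex a b0 sg h Hsg Hh).
  assert (HX : forall i j, 0 <= i -> 0 <= j -> i + j <= h -> X (tri a b0 sg i j))
    by (intros i j Hi Hj Hij; apply HDelta, Delta_tri; assumption).
  assert (Hbase : forall k, 0 <= k <= h -> P (tri a b0 sg k 0)).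
  { destruct Hfoot as [Hfoot | Hfoot].
    - apply (base_in_portal a b0 sg h Hsg X HX p0 0); [lia | assumption].
    - apply (base_in_portal a b0 sg h Hsg X HX p0 h); [lia | assumption]. }
  assert (Hreach : exists n, reach X S (tri a b0 sg 0 h) n).
  { destruct (Hconn v (tri a b0 sg 0 h)) as [n W]; [| assumption | now exists n, v].
    destruct (HS v Sv) as [(Xv & _) | Pv]; [assumption | now apply portal_x_in with p0]. }
  pose proof (fun dz dy => feasible_parents_apex a b0 sg h Hsg Hh X HX S P
    (portal_x_line X p0) (portal_x_walk X p0) Hbase
    (fun n => reach_sideB_through_portal X S P side b0 _ n HS HB) dz dy Hreach) as Hparents.
  split; intros dz dy Hz Hy; apply (Hparents dz dy Hz Hy).
Qed.
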